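(* Let $\phi:\mathbf{R}^n\to\mathbf{R}$ be a uniformly convex norm of class $\mathcal{C}^2$ on $\mathbf{R}^n\setminus\{0\}$, let $K\subseteq\mathbf{R}^n$ be closed, let $1<\sigma<\infty$ and $0<s<t<\infty$, and set $$K_{\sigma,s,t}=\bigl\{a+\rho\eta:(a,\eta)\in N^\phi(K),\ s\le\rho\le t,\ \sigma\rho\le r^\phi_K(a,\eta)\bigr\}.$$ Then $\delta^\phi_K$ is differentiable at every point of $K_{\sigma,s,t}$ and $\nabla\delta^\phi_K|K_{\sigma,s,t}$ is Lipschitz continuous.
   Context: A norm $\phi$ on $\mathbf{R}^n$ is uniformly convex if there is $\gamma>0$ such that $x\mapsto\phi(x)-\gamma|x|$ is convex ($|\cdot|$ the Euclidean norm). For closed $K\subseteq\mathbf{R}^n$: $\delta^\phi_K(x)=\inf\{\phi(y-x):y\in K\}$; $N^\phi(K)=\{(a,\eta)\in\mathbf{R}^n\times\mathbf{R}^n: a\in K,\ \phi(\eta)=1,\ \delta^\phi_K(a+s\eta)=s\text{ for some }s>0\}$; and $r^\phi_K(a,\eta)=\sup\{s>0:\delta^\phi_K(a+s\eta)=s\}\in(0,\infty]$ for $(a,\eta)\in N^\phi(K)$. *)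

From HB Require Import structures.
From mathcomp Require Import all_boot all_order all_algebra.
From mathcomp Require Import all_classical all_reals all_analysis.
Set Implicit Arguments. Unset Strict Implicit. Unset Printing Implicit Defensive.
Import Order.TTheory GRing.Theory Num.Theory.
Import numFieldNormedType.Exports.
Local Open Scope classical_set_scope.
Local Open Scope ring_scope.

Definition ebasis {R : realType} {n : nat} (i : 'I_n) : 'rV[R]_n :=
  delta_mx 0 i.

Definition euclid {R : realType} {n : nat} (x : 'rV[R]_n) : R :=
  Num.sqrt (\sum_(i < n) x ord0 i ^+ 2).

Definition is_norm {R : realType} {n : nat} (phi : 'rV[R]_n -> R) : Prop :=
  (forall x, 0 <= phi x) /\
  (forall x, phi x = 0 -> x = 0) /\
  (forall (c : R) x, phi (c *: x) = `|c| * phi x) /\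
  (forall x y, phi (x + y) <= phi x + phi y).

Definition convex_fun {R : realType} {n : nat} (f : 'rV[R]_n -> R) : Prop :=
  forall x y (l : R), 0 <= l <= 1 ->
    f ((1 - l) *: x + l *: y) <= (1 - l) * f x + l * f y.

Definition unif_convex {R : realType} {n : nat} (phi : 'rV[R]_n -> R) : Prop :=
  exists gamma : R, 0 < gamma /\ convex_fun (fun x => phi x - gamma * euclid x).

Definition C2_on {R : realType} {n : nat} (U : set 'rV[R]_n)
    (f : 'rV[R]_n -> R) : Prop :=
  forall x, U x ->
    {for x, continuous f} /\
    (forall i : 'I_n, derivable f x (ebasis i)) /\
    (forall i : 'I_n, {for x, continuous ('D_(ebasis i) f)}) /\
    (forall i j : 'I_n, derivable ('D_(ebasis i) f) x (ebasis j)) /\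
    (forall i j : 'I_n, {for x, continuous ('D_(ebasis j) ('D_(ebasis i) f))}).

Definition distK {R : realType} {n : nat} (phi : 'rV[R]_n -> R)
    (K : set 'rV[R]_n) (x : 'rV[R]_n) : R :=
  inf [set phi (y - x) | y in K].

Definition normal_bundle {R : realType} {n : nat} (phi : 'rV[R]_n -> R)
    (K : set 'rV[R]_n) : set ('rV[R]_n * 'rV[R]_n) :=
  [set p | K p.1 /\ phi p.2 = 1 /\
           exists s : R, 0 < s /\ distK phi K (p.1 + s *: p.2) = s].

Definition reach_fun {R : realType} {n : nat} (phi : 'rV[R]_n -> R)
    (K : set 'rV[R]_n) (a eta : 'rV[R]_n) : \bar R :=
  ereal_sup [set s%:E | s in [set s : R | 0 < s /\ distK phi K (a + s *: eta) = s]].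

Definition Kst {R : realType} {n : nat} (phi : 'rV[R]_n -> R)
    (K : set 'rV[R]_n) (sigma s t : R) : set 'rV[R]_n :=
  [set x | exists a eta rho,
      normal_bundle phi K (a, eta) /\ s <= rho <= t /\
      ((sigma * rho)%:E <= reach_fun phi K a eta)%E /\
      x = a + rho *: eta].

Definition grad {R : realType} {n : nat} (f : 'rV[R]_n -> R) (x : 'rV[R]_n)
  : 'rV[R]_n := \row_(i < n) ('d f x (ebasis i)).

From HB Require Import structures.
From mathcomp Require Import all_boot all_order all_algebra.
From mathcomp Require Import all_classical all_reals all_analysis.
From mathcomp Require Import lra ring zify.
Import Order.TTheory GRing.Theory Num.Theory.
Import numFieldNormedType.Exports.
Local Open Scope classical_set_scope.
Local Open Scope ring_scope.

(* Let x = a + rho eta lie in K_{sigma,s,t} and rho < rho' < r(a, eta), so that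
   delta(a + s0 eta) = s0 for some s0 > rho'.  As a lies in K and delta is
   1-Lipschitz for phi,
     rho' - phi (z - (a + rho' eta)) <= delta z <= phi (a - z),
   with equality on both sides at z = x.  Both bounds are C^2 near x, and
   their base points a - x and x - (a + rho' eta) lie in a fixed annulus on
   which the derivatives of phi up to order 2 are bounded.  Hence delta has at
   x a first-order expansion whose remainder is at most C |h|^2, uniformly on
   K_{sigma,s,t}; uniform quadratic expansions with bounded gradients force
   the gradient to be Lipschitz. *)

Section RowVectors.
Context {R : realType} {n : nat}.
Implicit Types (u v h p q : 'rV[R]_n).

Lemma normr_coord_le v i : `|v ord0 i| <= `|v|.
Proof.
rewrite [leRHS]/Num.Def.normr /= mx_normrE; apply/bigmax_geP; right => /=.
by exists (ord0, i).
Qed.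

Lemma normr_le_coord v (c : R) :
  0 <= c -> (forall i, `|v ord0 i| <= c) -> `|v| <= c.
Proof.
move=> c0 vc; rewrite [leLHS]/Num.Def.normr /= mx_normrE.
by apply: bigmax_le => // -[i j] _ /=; rewrite (ord1 i).
Qed.

Lemma normr_le_coordwise u v :
  (forall i, `|u ord0 i| <= `|v ord0 i|) -> `|u| <= `|v|.
Proof.
by move=> uv; apply: normr_le_coord => // i; apply: le_trans (uv i) _; apply: normr_coord_le.
Qed.

Lemma ebasisE i j : @ebasis R n i ord0 j = (j == i)%:R.
Proof. by rewrite /ebasis mxE eqxx. Qed.

Lemma normr_scale_ebasis (c : R) i : `|c *: @ebasis R n i| <= `|c|.
Proof.
apply: normr_le_coord => // j; rewrite mxE ebasisE.
by case: eqP => _; rewrite ?mulr1 ?mulr0 ?normr0.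
Qed.

Lemma normr_le_euclid v : `|v| <= euclid v.
Proof.
apply: normr_le_coord => [|i]; first exact: sqrtr_ge0.
rewrite /euclid -sqrtr_sqr ler_sqrt; last by apply: sumr_ge0 => j _; apply: sqr_ge0.
by rewrite (bigD1 i) //= lerDl sumr_ge0 // => j _; apply: sqr_ge0.
Qed.

Lemma euclid_le_normr v : euclid v <= n%:R * `|v|.
Proof.
have nv0 : 0 <= n%:R * `|v| by apply: mulr_ge0.
rewrite /euclid -(ger0_norm nv0) -sqrtr_sqr ler_sqrt ?sqr_ge0 //.
apply: le_trans (_ : \sum_(i < n) `|v| ^+ 2 <= _).
  apply: ler_sum => i _; rewrite -real_normK ?num_real //.
  by apply: lerXn2r; rewrite ?nnegrE // normr_coord_le.
rewrite sumr_const card_ord exprMn -[_ *+ n]mulr_natl.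
apply: ler_wpM2r; first exact: exprn_ge0.
by rewrite -natrX ler_nat; nia.
Qed.

Definition lform p h : R := \sum_k h ord0 k * p ord0 k.

Lemma lform_is_linear p : linear_for *:%R (lform p).
Proof.
move=> a u v; rewrite /lform scaler_sumr -big_split /=; apply: eq_bigr => k _.
by rewrite !mxE mulrDl -mulrA.
Qed.

HB.instance Definition _ p :=
  GRing.isLinear.Build R 'rV[R]_n R *:%R (lform p) (lform_is_linear p).

Lemma lformBl p q h : lform (p - q) h = lform p h - lform q h.
Proof. by rewrite /lform -sumrB; apply: eq_bigr => k _; rewrite !mxE mulrBr. Qed.

Lemma lformNl p h : lform (- p) h = - lform p h.
Proof. by rewrite -sub0r lformBl /lform big1 ?sub0r // => k _; rewrite mxE mulr0. Qed.

Lemma lform_scale_ebasis p (c : R) i : lform p (c *: ebasis i) = c * p ord0 i.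
Proof.
rewrite /lform (bigD1 i) //= big1 ?addr0 => [|j /negPf ji].
  by rewrite mxE ebasisE eqxx mulr1.
by rewrite mxE ebasisE ji mulr0 mul0r.
Qed.

Lemma lform_continuous p : continuous (lform p).
Proof.
apply: bounded_linear_continuous.
exists (\sum_k `|p ord0 k|); split; first by rewrite num_real.
move=> M M_gt; apply: filterS (@nbhs0_lt _ 'rV[R]_n _ ltr01) => h /= /ltW h1.
have lfh : `|lform p h| <= (\sum_k `|p ord0 k|) * `|h|.
  rewrite /lform mulr_suml; apply: le_trans (ler_norm_sum _ _ _) _.
  by apply: ler_sum => k _; rewrite normrM mulrC ler_wpM2l ?normr_coord_le.
apply: le_trans lfh _; rewrite -[M]mulr1.
by apply: ler_pM => //; [apply: sumr_ge0|apply: ltW].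
Qed.

Definition quad_approx (f : 'rV[R]_n -> R) (x p : 'rV[R]_n) (r C : R) :=
  forall h, `|h| <= r -> `|f (x + h) - f x - lform p h| <= C * `|h| ^+ 2.

Lemma quad_approx_grad {f x p} {r C : R} : 0 < r -> quad_approx f x p r C ->
  differentiable f x /\ grad f x = p.
Proof.
move=> r0 fxp.
have f_expansion : f \o shift x = cst (f x) + lform p +o_ (0 : 'rV[R]_n) id.
  apply/eqaddoP => eps eps0.
  have m0 : 0 < Num.min r (eps / (`|C| + 1)).
    by rewrite lt_min r0 divr_gt0 // ltr_wpDl.
  apply: filterS (@nbhs0_lt _ 'rV[R]_n _ m0) => h /=.
  rewrite lt_min => /andP[/ltW hr he].
  rewrite !fctE /= [h + x]addrC opprD addrA.
  apply: le_trans (fxp h hr) _; rewrite expr2 mulrA ler_wpM2r //.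
  apply: (@le_trans _ _ ((`|C| + 1) * `|h|)).
    by apply: ler_wpM2r => //; apply: le_trans (ler_norm C) _; rewrite lerDl.
  by rewrite mulrC -ler_pdivlMr ?ltr_wpDl // ltW.
have dfx : ('d f x : 'rV[R]_n -> R) = lform p.
  by apply: diff_unique f_expansion; apply: lform_continuous.
have dif : differentiable f x.
  by apply/diff_locallyP; rewrite dfx; split=> //; apply: lform_continuous.
split=> //; apply/rowP => k.
by rewrite /grad mxE dfx -[ebasis k]scale1r lform_scale_ebasis mul1r.
Qed.

Lemma le0_of_le_mul_small (d c r : R) : 0 < r ->
  (forall e, 0 < e <= r -> d <= c * e) -> d <= 0.
Proof.
move=> r0 dce; rewrite leNgt; apply/negP => d0.
pose e := Num.min r (d / (2 * (`|c| + 1))).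
have e0 : 0 < e by rewrite lt_min r0 divr_gt0 // mulr_gt0 // ltr_wpDl.
have := dce e; rewrite e0 ge_min lexx => /(_ isT).
have : `|c| * e <= `|c| * (d / (2 * (`|c| + 1))) by rewrite ler_wpM2l // ge_min lexx orbT.
have : c * e <= `|c| * e by rewrite ler_wpM2r ?ler_norm // ltW.
have : `|c| * (d / (2 * (`|c| + 1))) < d.
  rewrite mulrA ltr_pdivrMr ?mulr_gt0 ?ltr_wpDl //.
  by have := normr_ge0 c; nra.
lra.
Qed.

Lemma lform_quad_bounded_eq0 p (r C : R) : 0 < r ->
  (forall h, `|h| <= r -> lform p h <= C * `|h| ^+ 2) -> p = 0.
Proof.
move=> r0 pC; apply/rowP => k; rewrite mxE.
have along (c : R) : `|c| <= r -> c * p ord0 k <= `|C| * c ^+ 2.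
  move=> cr; rewrite -lform_scale_ebasis.
  apply: le_trans (pC _ (le_trans (normr_scale_ebasis c k) cr)) _.
  apply: le_trans (ler_wpM2r (exprn_ge0 _ (normr_ge0 _)) (ler_norm C)) _.
  rewrite -[c ^+ 2]real_normK ?num_real // ler_wpM2l //.
  by apply: lerXn2r; rewrite ?nnegrE //; apply: normr_scale_ebasis.
have small (c : R) : 0 < c <= r -> c * p ord0 k <= c * (`|C| * c) /\
                                   c * - p ord0 k <= c * (`|C| * c).
  move=> /andP[c0 cr]; have -> : c * (`|C| * c) = `|C| * c ^+ 2 by ring.
  split; first by apply: along; rewrite gtr0_norm.
  by rewrite mulrN -mulNr -[c ^+ 2]sqrrN; apply: along; rewrite normrN gtr0_norm.
apply/eqP; rewrite eq_le -oppr_le0.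
apply/andP; split; apply: (@le0_of_le_mul_small _ `|C| _ r0) => e e0r.
  by have [+ _] := small e e0r; rewrite ler_pM2l //; case/andP: e0r.
by have [_] := small e e0r; rewrite ler_pM2l //; case/andP: e0r.
Qed.

Lemma quad_squeeze f x p q (r C : R) : 0 < r ->
  (forall h, `|h| <= r -> f x + lform q h - C * `|h| ^+ 2 <= f (x + h)) ->
  (forall h, `|h| <= r -> f (x + h) <= f x + lform p h + C * `|h| ^+ 2) ->
  p = q /\ quad_approx f x p r C.
Proof.
move=> r0 lower upper.
have qp : q - p = 0.
  apply: (@lform_quad_bounded_eq0 _ _ (C + C) r0) => h hr.
  by rewrite lformBl; have := lower h hr; have := upper h hr; lra.
have pq : p = q by apply/esym/subr0_eq.
split=> // h hr; rewrite ler_norml.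
by have := lower h hr; have := upper h hr; rewrite -pq; lra.
Qed.

Lemma quad_approx_lipschitz {f : 'rV[R]_n -> R} {g : 'rV[R]_n -> 'rV[R]_n}
    {S : set 'rV[R]_n} {r C M : R} : 0 < r -> 0 <= C -> 0 <= M ->
  (forall x, S x -> (forall k, `|g x ord0 k| <= M) /\ quad_approx f x (g x) r C) ->
  forall x y, S x -> S y -> `|g x - g y| <= (6 * C + 4 * M / r) * `|x - y|.
Proof.
move=> r0 C0 M0 Sg x y Sx Sy.
have [gxM fx] := Sg x Sx; have [gyM fy] := Sg y Sy.
set d := `|x - y|; have d0 : 0 <= d := normr_ge0 _.
have L0 : 0 <= 6 * C + 4 * M / r.
  by rewrite addr_ge0 ?divr_ge0 ?mulr_ge0 // ltW.
apply: normr_le_coord => [|k]; first exact: mulr_ge0.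
rewrite !mxE.
have [rd|dr] := ltP (r / 2) d.
  have far : 2 * M <= 4 * M / r * d.
    by rewrite mulrAC ler_pdivlMr //; nra.
  have := gxM k; have := gyM k; have := ler_normB (g x ord0 k) (g y ord0 k).
  have : 0 <= 6 * C * d by rewrite !mulr_ge0.
  lra.
have d2r : 2 * d <= r by lra.
have d1r : d <= r by lra.
(* Expand f (y + h) around x and around y. *)
have near h : `|h| <= d -> `|lform (g y - g x) h| <= 6 * C * d ^+ 2.
  move=> hd; have ud : `|y - x| = d by rewrite distrC.
  have uhd : `|y - x + h| <= 2 * d by apply: le_trans (ler_normD _ _) _; lra.
  have fx_yh := fx _ (le_trans uhd d2r).
  have fy_h := fy _ (le_trans hd d1r).
  have fx_y := fx (y - x) ltac:(by rewrite ud).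
  rewrite addrA subrKC raddfD /= in fx_yh; rewrite subrKC ud in fx_y.
  have s1 : C * `|y - x + h| ^+ 2 <= C * (2 * d) ^+ 2.
    by apply: ler_wpM2l => //; rewrite lerXn2r ?nnegrE ?mulr_ge0.
  have s2 : C * `|h| ^+ 2 <= C * d ^+ 2.
    by apply: ler_wpM2l => //; rewrite lerXn2r ?nnegrE.
  rewrite lformBl; move: fx_yh fy_h fx_y; rewrite !ler_norml => /andP[? ?] /andP[? ?] /andP[? ?].
  apply/andP; split; lra.
have dk : `|d *: ebasis k| <= d.
  by apply: le_trans (normr_scale_ebasis d k) _; rewrite ger0_norm.
have := near _ dk.
rewrite lform_scale_ebasis !mxE normrM ger0_norm // distrC => dD.
have [/normr0_eq0/subr0_eq ->|dn0] := eqVneq d 0; first by rewrite subrr normr0 mulr_ge0.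
have dp : 0 < d by rewrite lt_def dn0 d0.
rewrite -(ler_pM2l dp); apply: le_trans dD _.
have : 0 <= 4 * M / r * d ^+ 2 by rewrite mulr_ge0 ?divr_ge0 ?mulr_ge0 // ltW.
lra.
Qed.

End RowVectors.

Section MeanValue.
Context {R : realType}.

Lemma MVT_from0 (f df : R -> R) (T : R) :
  (forall t : R, `|t| <= `|T| -> is_derive t 1 f (df t)) ->
  exists2 c, `|c| <= `|T| & f T - f 0 = T * df c.
Proof.
move=> fdf.
have mvt a b : a <= b -> (forall x, a <= x <= b -> `|x| <= `|T|) ->
    exists2 c, `|c| <= `|T| & f b - f a = df c * (b - a).
  move=> ab abT.
  have fcont x : a <= x <= b -> {for x, continuous f}.
    move=> /abT /fdf fx; apply: differentiable_continuous.
    by apply/derivable1_diffP; apply: ex_derive.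
  have [c cab fc] : exists2 c, c \in `[a, b] & f b - f a = df c * (b - a).
    apply: MVT_segment ab _ _ => [x|]; last first.
      by apply: continuous_subspace_itv => x; rewrite in_itv; apply: fcont.
    by rewrite in_itv /= => /andP[ax xb]; apply/fdf/abT; rewrite !ltW.
  by exists c => //; apply: abT; rewrite in_itv in cab.
have [T0|T0] := leP 0 T.
  have [|c cT fc] := mvt 0 T T0; last by exists c; rewrite // fc subr0 mulrC.
  by move=> x /andP[x0 xT]; rewrite !ger0_norm // (le_trans x0 xT).
have [|c cT fc] := mvt T 0 (ltW T0).
  by move=> x /andP[Tx x0]; rewrite !ler0_norm ?lerN2 // ltW.
by exists c => //; rewrite -opprB fc; ring.
Qed.

Context {n : nat}.
Implicit Types (G : 'rV[R]_n -> R) (u e h v w z : 'rV[R]_n).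

Lemma is_derive_along G u e t : derivable G (u + t *: e) e ->
  is_derive t 1 (fun s : R => G (u + s *: e)) ('D_e G (u + t *: e)).
Proof.
move=> dG.
have quotE : (fun h : R => h^-1 *: (((fun s : R => G (u + s *: e)) \o shift t)
                 (h *: (1:R)) - G (u + t *: e))) =
             (fun h : R => h^-1 *: ((G \o shift (u + t *: e)) (h *: e)
                 - G (u + t *: e))).
  by apply/funext => h /=; rewrite scaler1 scalerDl addrCA.
by split; [rewrite /derivable quotE|rewrite /derive quotE].
Qed.

Lemma mvt_along_line G u e (T : R) :
  (forall t, `|t| <= `|T| -> derivable G (u + t *: e) e) ->
  exists2 t, `|t| <= `|T| & G (u + T *: e) - G u = T * 'D_e G (u + t *: e).
Proof.
move=> dG; have [c cT] := MVT_from0 _ _ _ (fun t tT => is_derive_along _ _ _ _ (dG t tT)).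
by rewrite scale0r addr0 => ->; exists c.
Qed.

Lemma mvt_coordinatewise G u h :
  (forall z, `|z - u| <= `|h| -> forall j, derivable G z (ebasis j)) ->
  exists xi : 'I_n -> 'rV[R]_n, (forall j, `|xi j - u| <= `|h|) /\
    G (u + h) - G u = \sum_j h ord0 j * 'D_(ebasis j) G (xi j).
Proof.
move=> dG.
(* Change one coordinate at a time, using the one-variable MVT on each segment. *)
suff stair (k : nat) v : (forall i : 'I_n, (k <= i)%N -> v ord0 i = 0) -> `|v| <= `|h| ->
    exists xi : 'I_n -> 'rV[R]_n, (forall j, `|xi j - u| <= `|v|) /\
    G (u + v) - G u = \sum_j v ord0 j * 'D_(ebasis j) G (xi j).
  by apply: (stair n) => // i; rewrite leqNgt ltn_ord.
elim: k v => [|k IH] v vk vh.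
  have -> : v = 0 by apply/rowP => i; rewrite mxE vk.
  exists (fun=> u); split=> [j|]; first by rewrite subrr normr0.
  by rewrite addr0 subrr big1 // => j _; rewrite mxE mul0r.
have [kn|nk] := ltnP k n; last first.
  by apply: IH => // i ki; apply: vk; have := ltn_ord i; lia.
pose kk : 'I_n := Ordinal kn; pose e := @ebasis R n kk.
pose v' := v - v ord0 kk *: e.
have vE : v = v' + v ord0 kk *: e by rewrite subrK.
have v'E i : v' ord0 i = if i == kk then 0 else v ord0 i.
  rewrite !mxE eqxx /=; case: eqP => [->|_]; first by rewrite mulr1 subrr.
  by rewrite mulr0 subr0.
clearbody v'.
have v'v : `|v'| <= `|v|.
  by apply: normr_le_coordwise => i; rewrite v'E; case: eqP; rewrite ?normr0.
have v'k (i : 'I_n) : (k <= i)%N -> v' ord0 i = 0.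
  move=> ki; rewrite v'E; case: eqP => // /eqP ik; apply: vk.
  by rewrite ltn_neqAle ki andbT; apply: contra ik => /eqP ki'; apply/eqP/val_inj.
have [xi' [xi'u xi'E]] := IH v' v'k (le_trans v'v vh).
have segment t : `|t| <= `|v ord0 kk| -> `|u + v' + t *: e - u| <= `|v|.
  move=> tv; rewrite addrAC [u + v']addrC addrK; apply: normr_le_coordwise => i.
  rewrite 2!mxE v'E ebasisE; case: eqP => [->|_]; first by rewrite add0r mulr1.
  by rewrite mulr0 addr0.
have [th thv thE] := mvt_along_line G (u + v') e (v ord0 kk)
  (fun t tv => dG _ (le_trans (segment t tv) vh) kk).
exists (fun j => if j == kk then u + v' + th *: e else xi' j); split.
  by move=> j; case: eqP => _; [apply: segment|apply: le_trans (xi'u j) v'v].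
rewrite {1}vE addrA.
have -> : G (u + v' + v ord0 kk *: e) - G u =
    (G (u + v' + v ord0 kk *: e) - G (u + v')) + (G (u + v') - G u).
  by rewrite addrA subrK.
rewrite xi'E thE.
rewrite [in RHS](bigD1 kk) //= (bigD1 kk) //= eqxx v'E eqxx mul0r add0r.
by congr (_ + _); apply: eq_bigr => j /negPf jk; rewrite jk v'E jk.
Qed.

Lemma normr_sum_le (F : 'I_n -> R) (c : R) :
  (forall k, `|F k| <= c) -> `|\sum_k F k| <= n%:R * c.
Proof.
move=> Fc; apply: le_trans (ler_norm_sum _ _ _) _.
by apply: le_trans (ler_sum _ (fun k _ => Fc k)) _; rewrite sumr_const card_ord mulr_natl.
Qed.

Definition pgrad G z : 'rV[R]_n := \row_k 'D_(ebasis k) G z.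

Lemma taylor2_bound G (M : R) w h :
  (forall z, `|z - w| <= `|h| -> (forall j, derivable G z (ebasis j)) /\
     (forall i j, derivable ('D_(ebasis j) G) z (ebasis i)) /\
     (forall i j, `|'D_(ebasis i) ('D_(ebasis j) G) z| <= M)) ->
  `|G (w + h) - G w - lform (pgrad G w) h| <= M * (n%:R * `|h|) ^+ 2.
Proof.
move=> GC2.
have [xi [xiw xiE]] := mvt_coordinatewise G w h (fun z zw => (GC2 z zw).1).
have DG k : `|'D_(ebasis k) G (xi k) - 'D_(ebasis k) G w| <= n%:R * (`|h| * M).
  have [ze [zew]] := mvt_coordinatewise ('D_(ebasis k) G) w (xi k - w)
    (fun z zw j => (GC2 z (le_trans zw (xiw k))).2.1 j k).
  rewrite subrKC => ->; apply: normr_sum_le => j; rewrite normrM.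
  apply: ler_pM => //; first exact: le_trans (normr_coord_le _ _) (xiw k).
  exact: (GC2 _ (le_trans (zew j) (xiw k))).2.2.
have -> : G (w + h) - G w - lform (pgrad G w) h =
    \sum_k h ord0 k * ('D_(ebasis k) G (xi k) - 'D_(ebasis k) G w).
  by rewrite xiE /lform -sumrB; apply: eq_bigr => k _; rewrite mxE mulrBr.
have -> : M * (n%:R * `|h|) ^+ 2 = n%:R * (`|h| * (n%:R * (`|h| * M))) by ring.
by apply: normr_sum_le => k; rewrite normrM ler_pM ?normr_coord_le.
Qed.

End MeanValue.

Section Bounds.
Context {R : realType} {n : nat}.
Implicit Types (f : 'rV[R]_n -> R) (v w z : 'rV[R]_n).

Lemma annulus_continuous_bounded (lo hi : R) f :
  (forall z, lo <= `|z| <= hi -> {for z, continuous f}) ->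
  exists M, forall z, lo <= `|z| <= hi -> `|f z| <= M.
Proof.
move=> fc; pose A := [set z : 'rV[R]_n | lo <= `|z| <= hi].
have Acl : closed A.
  have -> : A = (Num.Def.normr : 'rV[R]_n -> R) @^-1` ([set r | lo <= r] `&` [set r | r <= hi]).
    by apply/seteqP; split => z /=; [move/andP|move=> [? ?]; apply/andP].
  apply: (proj1 (continuous_closedP _) (@norm_continuous _ _)).
  by apply: closedI; [apply: closed_ge|apply: closed_le].
have Abd : bounded_set A.
  exists hi; split; first by rewrite num_real.
  by move=> M hiM z /andP[_ zh]; apply: le_trans zh (ltW hiM).
have fAco : compact (f @` A).
  apply: continuous_compact; last exact: bounded_closed_compact.
  by apply: continuous_in_subspaceT => z; rewrite inE; apply: fc.
have [M [_ fAM]] := compact_bounded fAco.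
by exists (M + 1) => z zA; apply: (fAM (M + 1)); [rewrite ltrDl|exists z].
Qed.

Lemma uniform_bound_fin (I : finType) (P : I -> R -> Prop) :
  (forall i M M', M <= M' -> P i M -> P i M') -> (forall i, exists M, P i M) ->
  exists M, 0 <= M /\ forall i, P i M.
Proof.
move=> Pmono Pex; have [Mf PM] := choice Pex.
exists (\sum_i `|Mf i|); split=> [|i]; first exact: sumr_ge0.
apply: Pmono (PM i); apply: le_trans (ler_norm _) _.
by rewrite (bigD1 i) //= lerDl sumr_ge0.
Qed.

Lemma C2_quad_approx_annulus f (lo hi : R) :
  C2_on [set x | x != 0] f -> 0 < lo ->
  exists C M, [/\ 0 <= C, 0 <= M & forall w, lo <= `|w| <= hi ->
    (forall k, `|pgrad f w ord0 k| <= M) /\ quad_approx f w (pgrad f w) (lo / 2) C].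
Proof.
move=> fC2 lo0.
have lo20 : 0 < lo / 2 by rewrite divr_gt0.
have nz z : lo / 2 <= `|z| -> z != 0.
  by move=> zlo; rewrite -normr_gt0 (lt_le_trans lo20).
have [M1 [M10 DM1]] := uniform_bound_fin _
  (fun (i : 'I_n) M => forall z, lo / 2 <= `|z| <= hi + lo / 2 ->
          `|'D_(ebasis i) f z| <= M)
  (fun i M M' MM' H z hz => le_trans (H z hz) MM')
  (fun i => annulus_continuous_bounded _ _ _
    (fun z hz => (fC2 z (nz z (proj1 (andP hz)))).2.2.1 i)).
have [M2 [M20 DM2]] := uniform_bound_fin _
  (fun (ij : 'I_n * 'I_n) M => forall z, lo / 2 <= `|z| <= hi + lo / 2 ->
          `|'D_(ebasis ij.1) ('D_(ebasis ij.2) f) z| <= M)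
  (fun i M M' MM' H z hz => le_trans (H z hz) MM')
  (fun ij => annulus_continuous_bounded _ _ _
    (fun z hz => (fC2 z (nz z (proj1 (andP hz)))).2.2.2.2 ij.2 ij.1)).
exists (M2 * n%:R ^+ 2), M1; split=> // [|w /andP[low wup]].
  by rewrite mulr_ge0 // exprn_ge0.
split=> [k|h hlo]; first by rewrite mxE; apply: DM1; apply/andP; split; lra.
have near z : `|z - w| <= `|h| -> lo / 2 <= `|z| <= hi + lo / 2.
  move=> zw.
  have := ler_normD (z - w) w; have := ler_normD (w - z) z.
  by rewrite !subrK distrC; lra.
apply: le_trans (taylor2_bound f M2 w h _) _; last by rewrite exprMn mulrA.
move=> z /near zA; have [_ [df [_ [ddf _]]]] := fC2 z (nz z (proj1 (andP zA))).
split; first exact: df.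
by split=> i j; [exact: ddf|exact: (DM2 (i, j) z zA)].
Qed.

Lemma sphere_scale v : v != 0 -> exists2 u : 'rV[R]_n, `|u| = 1 & v = `|v| *: u.
Proof.
move=> v0; exists (`|v|^-1 *: v).
  by rewrite normrZ normfV normr_id mulVf // normr_eq0.
by rewrite scalerA divff ?scale1r // normr_eq0.
Qed.

End Bounds.

Section NormDistance.
Context {R : realType} {n : nat} (phi : 'rV[R]_n -> R) (K : set 'rV[R]_n).
Hypothesis phi_norm : is_norm phi.
Implicit Types (a v w y z : 'rV[R]_n).

Let phi_ge0 v : 0 <= phi v. Proof. by case: phi_norm. Qed.
Let phi_eq0 v : phi v = 0 -> v = 0.
Proof. by case: phi_norm => _ [+ _]; apply. Qed.
Let phiZ (c : R) v : phi (c *: v) = `|c| * phi v.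
Proof. by case: phi_norm => _ [_ [+ _]]; apply. Qed.
Let phiD v w : phi (v + w) <= phi v + phi w.
Proof. by case: phi_norm => _ [_ [_]]; apply. Qed.
Let phi0 : phi 0 = 0.
Proof. by rewrite -(scale0r (0 : 'rV[R]_n)) phiZ normr0 mul0r. Qed.
Let phiN v : phi (- v) = phi v.
Proof. by rewrite -scaleN1r phiZ normrN normr1 mul1r. Qed.

Lemma distK_le_norm a z : K a -> distK phi K z <= phi (a - z).
Proof.
move=> Ka; apply: ge_inf; last by exists a.
by exists 0 => _ [y _ <-].
Qed.

Lemma distK_le_add y z : K !=set0 -> distK phi K y <= distK phi K z + phi (z - y).
Proof.
move=> [a Ka]; rewrite -lerBlDr; apply: lb_le_inf; first by exists (phi (a - z)), a.
move=> _ [k Kk <-]; rewrite lerBlDr.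
apply: le_trans (distK_le_norm k y Kk) _.
have -> : k - y = (k - z) + (z - y) by rewrite addrA subrK.
exact: phiD.
Qed.

Lemma distK_ge_ray a eta (rho : R) : K a -> phi eta = 1 ->
  (rho%:E < reach_fun phi K a eta)%E ->
  forall z, rho - phi (z - (a + rho *: eta)) <= distK phi K z.
Proof.
move=> Ka eta1 /ereal_sup_gt [_ [s0 [s00 ds0] <-]]; rewrite lte_fin => rhos0 z.
have := distK_le_add (a + s0 *: eta) z (ex_intro _ a Ka).
have := phiD (z - (a + rho *: eta)) ((a + rho *: eta) - (a + s0 *: eta)).
rewrite addrA subrK opprD addrACA subrr add0r -scalerBl phiZ eta1 mulr1 ds0.
rewrite ler0_norm; lra.
Qed.

Lemma distK_quad_approx_ray a eta (rho m r C M : R) :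
  K a -> phi eta = 1 -> 0 < rho -> 0 < m -> 0 < r ->
  (((1 + m) * rho)%:E < reach_fun phi K a eta)%E ->
  (forall k, `|pgrad phi (- (rho *: eta)) ord0 k| <= M) ->
  quad_approx phi (- (rho *: eta)) (pgrad phi (- (rho *: eta))) r C ->
  quad_approx phi (- ((m * rho) *: eta)) (pgrad phi (- ((m * rho) *: eta))) r C ->
  exists P : 'rV[R]_n, (forall k, `|P ord0 k| <= M) /\
    quad_approx (distK phi K) (a + rho *: eta) P r C.
Proof.
move=> Ka eta1 rho0 m0 r0 reach gradf approxf approxg.
have phi_ray (c : R) : 0 <= c -> phi (- (c *: eta)) = c.
  by move=> c0; rewrite phiN phiZ eta1 mulr1 ger0_norm.
pose P := - pgrad phi (- (rho *: eta)); pose Q := - pgrad phi (- ((m * rho) *: eta)).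
have upper h : `|h| <= r ->
    distK phi K (a + rho *: eta + h) <= rho + lform P h + C * `|h| ^+ 2.
  move=> hr; apply: le_trans (distK_le_norm _ _ Ka) _.
  have -> : a - (a + rho *: eta + h) = - (rho *: eta) + - h.
    by rewrite opprD addrA opprD addNKr.
  have := approxf (- h); rewrite normrN => /(_ hr).
  rewrite (phi_ray _ (ltW rho0)) raddfN /P lformNl ler_norml => /andP[_]; lra.
have lower h : `|h| <= r ->
    rho + lform Q h - C * `|h| ^+ 2 <= distK phi K (a + rho *: eta + h).
  move=> hr; apply: le_trans (distK_ge_ray _ _ _ Ka eta1 reach _).
  have -> : a + rho *: eta + h - (a + ((1 + m) * rho) *: eta) = - ((m * rho) *: eta) + h.
    by rewrite mulrDl mul1r scalerDl addrA [_ + h]addrC addrKA addrC.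
  have := approxg h hr; rewrite (phi_ray _ (mulr_ge0 (ltW m0) (ltW rho0))) /Q lformNl.
  by rewrite ler_norml => /andP[_]; lra.
have dist_x : distK phi K (a + rho *: eta) = rho.
  have r0' : `|0 : 'rV[R]_n| <= r by rewrite normr0 ltW.
  have := upper 0 r0'; have := lower 0 r0'.
  rewrite addr0 !raddf0 normr0 expr0n /= mulr0 !addr0 !subr0 => lo_x up_x.
  by apply/le_anti; rewrite up_x lo_x.
have [_ approx] := @quad_squeeze _ _ (distK phi K) (a + rho *: eta) P Q r C r0
  ltac:(by rewrite dist_x) ltac:(by rewrite dist_x).
by exists P; split=> // k; rewrite mxE normrN.
Qed.

Hypothesis phi_C2 : C2_on [set x | x != 0] phi.

Lemma is_norm_equiv : exists c1 c2, [/\ 0 < c1, 0 < c2 &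
  forall v, phi v <= c1 * `|v| /\ `|v| <= c2 * phi v].
Proof.
have sphere (u : 'rV[R]_n) : 1 <= `|u| <= 1 -> `|u| = 1.
  by move=> u1; apply/eqP; rewrite eq_le andbC.
have phi_cont (u : 'rV[R]_n) : 1 <= `|u| <= 1 -> {for u, continuous phi}.
  move=> /sphere u1; have u0 : u != 0 by rewrite -normr_eq0 u1 oner_eq0.
  exact: (phi_C2 u u0).1.
have phi_gt0 (u : 'rV[R]_n) : `|u| = 1 -> 0 < phi u.
  move=> u1; rewrite lt_def phi_ge0 andbT; apply/eqP => /phi_eq0 u0.
  by move: u1; rewrite u0 normr0 => /esym/eqP; rewrite oner_eq0.
have [M1 phiM1] := annulus_continuous_bounded _ _ _ phi_cont.
have [M2 phiM2] := annulus_continuous_bounded _ _ (fun u => (phi u)^-1)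
  (fun u u1 => continuousV (lt0r_neq0 (phi_gt0 u (sphere u u1))) (phi_cont u u1)).
exists (`|M1| + 1), (`|M2| + 1); split=> [||v]; rewrite ?ltr_wpDl //.
have [->|/sphere_scale[u u1 ->]] := eqVneq v 0.
  by rewrite phi0 normr0 !mulr0.
have u1' : 1 <= `|u| <= 1 by rewrite u1 lexx.
have pu := phi_gt0 u u1.
rewrite phiZ normrZ normr_id u1 mulr1 mulrCA; split.
  rewrite mulrC ler_wpM2r //; apply: le_trans (ler_norm _) _.
  by apply: le_trans (phiM1 u u1') _; apply: le_trans (ler_norm M1) _; rewrite lerDl.
rewrite -[X in X <= _]mulr1; apply: ler_wpM2l => //.
rewrite -ler_pdivrMr // div1r.
apply: le_trans (ler_norm _) _; apply: le_trans (phiM2 u u1') _.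
by apply: le_trans (ler_norm M2) _; rewrite lerDl.
Qed.

Variables (sigma s t : R).
Hypotheses (sigma_gt1 : 1 < sigma) (s_gt0 : 0 < s).

Lemma Kst_quad_approx : exists r C M, [/\ 0 < r, 0 <= C, 0 <= M &
  forall x, Kst phi K sigma s t x -> exists P : 'rV[R]_n,
    (forall k, `|P ord0 k| <= M) /\ quad_approx (distK phi K) x P r C].
Proof.
have [c1 [c2 [c10 c20 phi_equiv]]] := is_norm_equiv.
have [m [m0 m1 msigma]] : exists m : R, [/\ 0 < m, m <= 1 & 1 + m < sigma].
  exists (Num.min 1 ((sigma - 1) / 2)); split; rewrite ?ge_min ?lexx //.
    by rewrite lt_min ltr01 divr_gt0 // subr_gt0.
  have : Num.min 1 ((sigma - 1) / 2) <= (sigma - 1) / 2 by rewrite ge_min lexx orbT.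
  by have := sigma_gt1; lra.
pose lo := m * s / c1.
have lo0 : 0 < lo by rewrite divr_gt0 // mulr_gt0.
have [C [M [C0 M0 taylor]]] := C2_quad_approx_annulus phi lo (t * c2) phi_C2 lo0.
exists (lo / 2), C, M; split=> //; first by rewrite divr_gt0.
move=> _ [a [eta [rho [[Ka [eta1 _]] [/andP[srho rhot] [reach ->]]]]]].
have rho0 : 0 < rho := lt_le_trans s_gt0 srho.
have [eta_lo eta_hi] : 1 <= c1 * `|eta| /\ `|eta| <= c2.
  by have [] := phi_equiv eta; rewrite eta1 mulr1.
(* [m <= 1] keeps both base points [- (rho *: eta)] and [- ((m * rho) *: eta)]
   in the annulus [lo <= `|w| <= t * c2]. *)
have annulus (q : R) : m <= q <= 1 -> lo <= `|- ((q * rho) *: eta)| <= t * c2.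
  move=> /andP[mq q1]; have q0 : 0 < q := lt_le_trans m0 mq.
  have qrho : m * s <= q * rho by apply: ler_pM => //; apply: ltW.
  rewrite normrN normrZ gtr0_norm ?mulr_gt0 //; apply/andP; split.
    rewrite ler_pdivrMr // -mulrA; apply: le_trans qrho _.
    rewrite -{1}[q * rho]mulr1; apply: ler_wpM2l; last by rewrite mulrC.
    by rewrite mulr_ge0 ?ltW.
  rewrite -mulrA -[t * c2]mul1r; apply: ler_pM => //; first exact: ltW.
    by rewrite mulr_ge0 // ltW.
  by apply: ler_pM => //; apply: ltW.
have [gradf approxf] := taylor _ (annulus 1 ltac:(by rewrite m1 lexx)).
have [_ approxg] := taylor _ (annulus m ltac:(by rewrite m1 lexx)).
rewrite mul1r in gradf approxf.
apply: distK_quad_approx_ray approxf approxg => //; first by rewrite divr_gt0.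
by apply: lt_le_trans reach; rewrite lte_fin ltr_pM2r.
Qed.

End NormDistance.

Theorem theorem1p4 (R : realType) (n : nat) (phi : 'rV[R]_n -> R)
    (K : set 'rV[R]_n) (sigma s t : R) :
  is_norm phi -> unif_convex phi -> C2_on [set x | x != 0] phi ->
  closed K -> 1 < sigma -> 0 < s -> s < t ->
  (forall x, Kst phi K sigma s t x -> differentiable (distK phi K) x) /\
  (exists L : R, forall x y, Kst phi K sigma s t x -> Kst phi K sigma s t y ->
     euclid (grad (distK phi K) x - grad (distK phi K) y) <= L * euclid (x - y)).
Proof.
move=> phi_norm _ phi_C2 _ sigma_gt1 s_gt0 _.
have [r [C [M [r0 C0 M0 approx]]]] :=
  Kst_quad_approx phi K phi_norm phi_C2 sigma s t sigma_gt1 s_gt0.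
have Kst_grad x : Kst phi K sigma s t x -> differentiable (distK phi K) x /\
    (forall k, `|grad (distK phi K) x ord0 k| <= M) /\
    quad_approx (distK phi K) x (grad (distK phi K) x) r C.
  by move=> /approx [P [PM Px]]; have [dx ->] := quad_approx_grad r0 Px.
split=> [x /Kst_grad[]//|].
exists (n%:R * (6 * C + 4 * M / r)) => x y Kx Ky.
have lip := quad_approx_lipschitz r0 C0 M0 (fun x Kx => (Kst_grad x Kx).2) x y Kx Ky.
apply: le_trans (euclid_le_normr _) _; rewrite -[_ * _ * euclid _]mulrA; apply: ler_wpM2l => //.
apply: le_trans lip _; apply: ler_wpM2l; last exact: normr_le_euclid.
by rewrite addr_ge0 ?divr_ge0 ?mulr_ge0 // ltW.
Qed.
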